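(* Let $A\in\mathbb{R}^{m\times n}$ be semi-monotone (i.e. $A^{\dagger}\geq 0$), let $A=M-N=U-V$ be two proper weak regular splittings of $A$, and let $H=U^{\dagger}VM^{\dagger}N$. Suppose $R(M+U-A)=R(A)$ and $N(M+U-A)=N(A)$. Let $B=M(M+U-A)^{\dagger}U$ and $C=B-A$. Then $A=B-C$ is a proper weak regular splitting of $A$ which is induced by $H$, i.e. $B^{\dagger}=U^{\dagger}(VM^{\dagger}+I)$ and $B^{\dagger}C=H$; moreover it is the unique proper splitting $A=\bar B-\bar C$ with $\bar B^{\dagger}\bar C=H$.
   Context: All matrices are real. $X^{\dagger}$ denotes the Moore–Penrose inverse of $X$, and $\rho(\cdot)$ the spectral radius. For a matrix $X$, $X\geq 0$ means that all entries of $X$ are nonnegative and at least one entry is positive; $X\geq Y$ means $X-Y\geq 0$. $R(X)$ and $N(X)$ denote range and null space. A splitting $A=U-V$ is proper if $R(U)=R(A)$ and $N(U)=N(A)$; it is a proper weak regular splitting if it is proper, $U^{\dagger}\geq 0$ and $U^{\dagger}V\geq 0$. $H$ is the iteration matrix of the alternating scheme $x^{i+1}=U^{\dagger}VM^{\dagger}Nx^{i}+U^{\dagger}(VM^{\dagger}+I)b$; a splitting $A=B-C$ is said to be induced by $H$ if $B^{\dagger}C=H$ (with $B^{\dagger}=U^{\dagger}(VM^{\dagger}+I)$). *)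

From mathcomp Require Import all_boot all_order all_algebra.
From mathcomp Require Import boolp classical_sets reals.
Set Implicit Arguments. Unset Strict Implicit. Unset Printing Implicit Defensive.
Import Order.TTheory GRing.Theory Num.Theory.
Local Open Scope ring_scope.

Section Defs.
Variable R : realType.

Definition is_MP_inverse m n (A : 'M[R]_(m, n)) (X : 'M[R]_(n, m)) : Prop :=
  [/\ A *m X *m A = A, X *m A *m X = X,
      (A *m X)^T = A *m X & (X *m A)^T = X *m A].

(* The Moore-Penrose inverse A^dagger (it exists and is unique for real
   matrices; xget picks it). *)
Definition mpinv m n (A : 'M[R]_(m, n)) : 'M[R]_(n, m) :=
  xget 0 (fun X => is_MP_inverse A X).

Definition mx_ge0 m n (X : 'M[R]_(m, n)) : Prop := forall i j, 0 <= X i j.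

Definition same_range m n (A B : 'M[R]_(m, n)) : Prop :=
  forall y : 'cV[R]_m, (exists x, A *m x = y) <-> (exists x, B *m x = y).

Definition same_null m n (A B : 'M[R]_(m, n)) : Prop :=
  forall x : 'cV[R]_n, A *m x = 0 <-> B *m x = 0.

Definition proper_splitting m n (A U V : 'M[R]_(m, n)) : Prop :=
  [/\ A = U - V, same_range U A & same_null U A].

Definition proper_weak_regular_splitting m n (A U V : 'M[R]_(m, n)) : Prop :=
  [/\ proper_splitting A U V, mx_ge0 (mpinv U) & mx_ge0 (mpinv U *m V)].

End Defs.

(* Write W = M + U - A = M + V.  Because U, W and M all have the range and
   the null space of A, their range projectors P P^dagger coincide, and so do
   their null-space projectors P^dagger P.  This makes X = U^dagger W M^dagger
   satisfy the Penrose equations for B = M W^dagger U, with B X = M M^dagger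
   and X B = U^dagger U; expanding W = M + V gives X = U^dagger (V M^dagger + I)
   and X (B - A) = U^dagger V M^dagger N.  Uniqueness holds because every
   proper splitting A = B' - C' satisfies B'^dagger = (A^dagger A - B'^dagger C') A^dagger,
   so B'^dagger, hence B', is determined by B'^dagger C'. *)
From mathcomp Require Import all_boot all_order all_algebra.
From mathcomp Require Import boolp classical_sets reals.
Import GRing.Theory Num.Theory.
Set Implicit Arguments. Unset Strict Implicit.
Local Open Scope ring_scope.

Section MoorePenrose.
Variable R : realType.
Implicit Types m n k r : nat.

Lemma rowv_mulmx_tr_eq0 k (y : 'rV[R]_k) : y *m y^T = 0 -> y = 0.
Proof.
move=> /matrixP /(_ 0 0); rewrite !mxE => sum_sq0.
have sq0 : forall j : 'I_k, true -> y 0 j * y 0 j = 0.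
  apply: psumr_eq0P => [j _|]; first by rewrite -expr2 sqr_ge0.
  by rewrite -[RHS]sum_sq0; apply: eq_bigr => j _; rewrite !mxE.
apply/matrixP => i j; rewrite (ord1 i) !mxE.
by have /eqP := sq0 j isT; rewrite mulf_eq0 orbb => /eqP.
Qed.

Lemma row_free_gram_unit r n (G : 'M[R]_(r, n)) :
  row_free G -> G *m G^T \in unitmx.
Proof.
move=> freeG; rewrite -row_free_unit -kermx_eq0; apply/eqP/row_matrixP => i.
rewrite row0; set x := row i (kermx (G *m G^T)).
have xG0 : x *m (G *m G^T) = 0 by rewrite /x -row_mul mulmx_ker row0.
have : (x *m G) *m (x *m G)^T = 0.
  by rewrite trmx_mul !mulmxA -(mulmxA x) xG0 mul0mx.
by move/rowv_mulmx_tr_eq0/eqP; rewrite mulmx_free_eq0 // => /eqP.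
Qed.

Lemma is_MP_inverse_mulmx m n r (F : 'M[R]_(m, r)) (G : 'M[R]_(r, n)) :
  G *m G^T \in unitmx -> F^T *m F \in unitmx ->
  is_MP_inverse (F *m G) (G^T *m invmx (G *m G^T) *m invmx (F^T *m F) *m F^T).
Proof.
move=> unitG unitF.
set P := invmx (G *m G^T); set Q := invmx (F^T *m F).
have GP : G *m G^T *m P = 1%:M by rewrite mulmxV.
have QF : Q *m (F^T *m F) = 1%:M by rewrite mulVmx.
have AX : F *m G *m (G^T *m P *m Q *m F^T) = F *m Q *m F^T.
  by rewrite -!mulmxA (mulmxA G) (mulmxA (G *m G^T)) GP mul1mx.
have XA : (G^T *m P *m Q *m F^T) *m (F *m G) = G^T *m P *m G.
  by rewrite -!mulmxA (mulmxA (F^T)) (mulmxA Q) QF mul1mx.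
have symP : P^T = P by rewrite /P trmx_inv trmx_mul trmxK.
have symQ : Q^T = Q by rewrite /Q trmx_inv trmx_mul trmxK.
split.
- by rewrite AX -!mulmxA (mulmxA (F^T)) (mulmxA Q) QF mul1mx.
- by rewrite XA -!mulmxA (mulmxA G) (mulmxA (G *m G^T)) GP mul1mx.
- by rewrite AX !trmx_mul trmxK symQ mulmxA.
- by rewrite XA !trmx_mul trmxK symP mulmxA.
Qed.

Lemma is_MP_inverse_exists m n (A : 'M[R]_(m, n)) : exists X, is_MP_inverse A X.
Proof.
have unitG : row_base A *m (row_base A)^T \in unitmx.
  exact/row_free_gram_unit/row_base_free.
have unitF : (col_base A)^T *m col_base A \in unitmx.
  rewrite -{2}(trmxK (col_base A)); apply: row_free_gram_unit.
  by rewrite /row_free mxrank_tr; have := col_base_full A; rewrite /row_full.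
by have := is_MP_inverse_mulmx unitG unitF; rewrite mulmx_base => MP; exact: ex_intro MP.
Qed.

Lemma mpinvP m n (A : 'M[R]_(m, n)) : is_MP_inverse A (mpinv A).
Proof. exact: xgetPex (is_MP_inverse_exists A). Qed.

Lemma is_MP_inverse_uniq m n (A : 'M[R]_(m, n)) X Y :
  is_MP_inverse A X -> is_MP_inverse A Y -> X = Y.
Proof.
case=> AXA XAX symAX symXA [AYA YAY symAY symYA].
have XA_YA : X *m A = Y *m A.
  rewrite -symXA trmx_mul -{1}AYA !trmx_mul mulmxA -(trmx_mul Y A) -mulmxA.
  by rewrite -(trmx_mul X A) symYA symXA mulmxA -(mulmxA Y A X) -mulmxA AXA.
have AX_AY : A *m X = A *m Y.
  rewrite -symAX trmx_mul -{1}AYA !trmx_mul mulmxA -(trmx_mul A X).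
  by rewrite -(trmx_mul A Y) symAX symAY mulmxA AXA.
by rewrite -XAX -mulmxA AX_AY mulmxA XA_YA YAY.
Qed.

Lemma mpinv_eq m n (A : 'M[R]_(m, n)) X : is_MP_inverse A X -> mpinv A = X.
Proof. exact: is_MP_inverse_uniq (mpinvP A). Qed.

Lemma mpinvK m n (A : 'M[R]_(m, n)) : mpinv (mpinv A) = A.
Proof. by apply: mpinv_eq; case: (mpinvP A). Qed.

Lemma mulmx_mpinvK m n (A : 'M[R]_(m, n)) : A *m mpinv A *m A = A.
Proof. by case: (mpinvP A). Qed.

Lemma mpinv_mulmxK m n (A : 'M[R]_(m, n)) : mpinv A *m A *m mpinv A = mpinv A.
Proof. by case: (mpinvP A). Qed.

Lemma matrix_cV_ext m n (F G : 'M[R]_(m, n)) :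
  (forall x : 'cV[R]_n, F *m x = G *m x) -> F = G.
Proof.
move=> FG; apply/matrixP => i j.
by move: (FG (delta_mx j 0)) => /matrixP/(_ i 0); rewrite -!colE !mxE.
Qed.

Lemma same_rangeE m n (P Q : 'M[R]_(m, n)) :
  same_range P Q <-> P *m mpinv P = Q *m mpinv Q.
Proof.
case: (mpinvP P) => PXP _ symPX _; case: (mpinvP Q) => QYQ _ symQY _.
split=> [rangePQ | projPQ y].
- have projP_Q : P *m mpinv P *m Q = Q.
    apply: matrix_cV_ext => x.
    have [z Pz] : exists z, P *m z = Q *m x by apply/rangePQ; exists x.
    by rewrite -mulmxA -Pz mulmxA PXP.
  have projQ_P : Q *m mpinv Q *m P = P.
    apply: matrix_cV_ext => x.
    have [z Qz] : exists z, Q *m z = P *m x by apply/rangePQ; exists x.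
    by rewrite -mulmxA -Qz mulmxA QYQ.
  have PQ_Q : P *m mpinv P *m (Q *m mpinv Q) = Q *m mpinv Q.
    by rewrite mulmxA projP_Q.
  have QP_P : Q *m mpinv Q *m (P *m mpinv P) = P *m mpinv P.
    by rewrite mulmxA projQ_P.
  by rewrite -symPX -QP_P trmx_mul symQY symPX PQ_Q.
- split=> [[x <-] | [x <-]].
  + by exists (mpinv Q *m P *m x); rewrite !mulmxA -projPQ PXP.
  + by exists (mpinv P *m Q *m x); rewrite !mulmxA projPQ QYQ.
Qed.

Lemma same_nullE m n (P Q : 'M[R]_(m, n)) :
  same_null P Q <-> mpinv P *m P = mpinv Q *m Q.
Proof.
case: (mpinvP P) => PXP _ _ symXP; case: (mpinvP Q) => QYQ _ _ symYQ.
split=> [nullPQ | projPQ x].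
- have projP_Q : mpinv P *m P *m (mpinv Q *m Q) = mpinv P *m P.
    apply/eqP; rewrite -subr_eq0 -[X in _ - X]mulmx1 -mulmxBr; apply/eqP.
    apply: matrix_cV_ext => x; rewrite mul0mx -!mulmxA.
    suff -> : P *m ((mpinv Q *m Q - 1%:M) *m x) = 0 by rewrite mulmx0.
    by apply/nullPQ; rewrite mulmxA mulmxBr mulmx1 mulmxA QYQ subrr mul0mx.
  have projQ_P : mpinv Q *m Q *m (mpinv P *m P) = mpinv Q *m Q.
    apply/eqP; rewrite -subr_eq0 -[X in _ - X]mulmx1 -mulmxBr; apply/eqP.
    apply: matrix_cV_ext => x; rewrite mul0mx -!mulmxA.
    suff -> : Q *m ((mpinv P *m P - 1%:M) *m x) = 0 by rewrite mulmx0.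
    by apply/nullPQ; rewrite mulmxA mulmxBr mulmx1 mulmxA PXP subrr mul0mx.
  by rewrite -symXP -{1}projP_Q trmx_mul symYQ symXP projQ_P.
- split=> [Px0 | Qx0].
  + by rewrite -QYQ -(mulmxA Q) -projPQ !mulmxA -(mulmxA _ P) Px0 mulmx0.
  + by rewrite -PXP -(mulmxA P) projPQ !mulmxA -(mulmxA _ Q) Qx0 mulmx0.
Qed.

Lemma mpinv_proper_splitting m n (A B C : 'M[R]_(m, n)) :
  proper_splitting A B C -> mpinv B = (mpinv A *m A - mpinv B *m C) *m mpinv A.
Proof.
case=> defA /same_rangeE rangeBA /same_nullE nullBA.
rewrite -{1}mpinv_mulmxK -mulmxA rangeBA mulmxA; congr (_ *m _).
by rewrite -nullBA {1}defA mulmxBr.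
Qed.

Lemma mx_ge0_mul m n k (P : 'M[R]_(m, n)) (Q : 'M[R]_(n, k)) :
  mx_ge0 P -> mx_ge0 Q -> mx_ge0 (P *m Q).
Proof. by move=> P0 Q0 i j; rewrite mxE; apply: sumr_ge0 => l _; apply: mulr_ge0. Qed.

Lemma mx_ge0_add m n (P Q : 'M[R]_(m, n)) :
  mx_ge0 P -> mx_ge0 Q -> mx_ge0 (P + Q).
Proof. by move=> P0 Q0 i j; rewrite mxE; apply: addr_ge0. Qed.

Section Sandwich.
Variables (m n : nat) (M W U : 'M[R]_(m, n)).
Hypothesis rangeUW : U *m mpinv U = W *m mpinv W.
Hypothesis nullWM : mpinv W *m W = mpinv M *m M.

Lemma mulmx_sandwich_mpinv :
  M *m mpinv W *m U *m (mpinv U *m W *m mpinv M) = M *m mpinv M.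
Proof.
rewrite -!mulmxA (mulmxA U) rangeUW !mulmxA -(mulmxA M _ W) -(mulmxA M _ (mpinv W)).
by rewrite mpinv_mulmxK -(mulmxA M) nullWM mulmxA mulmx_mpinvK.
Qed.

Lemma mulmx_mpinv_sandwich :
  mpinv U *m W *m mpinv M *m (M *m mpinv W *m U) = mpinv U *m U.
Proof.
rewrite -!mulmxA (mulmxA (mpinv M)) -nullWM !mulmxA.
rewrite -(mulmxA (mpinv U) W (mpinv W)) -(mulmxA (mpinv U) _ W) mulmx_mpinvK.
by rewrite -(mulmxA (mpinv U) W (mpinv W)) -rangeUW mulmxA mpinv_mulmxK.
Qed.

Lemma mpinv_sandwich :
  mpinv (M *m mpinv W *m U) = mpinv U *m W *m mpinv M.
Proof.
have [_ _ symMX _] := mpinvP M; have [_ _ _ symXU] := mpinvP U.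
apply: mpinv_eq; split.
- by rewrite mulmx_sandwich_mpinv !mulmxA mulmx_mpinvK.
- by rewrite mulmx_mpinv_sandwich !mulmxA mpinv_mulmxK.
- by rewrite mulmx_sandwich_mpinv.
- by rewrite mulmx_mpinv_sandwich.
Qed.

End Sandwich.

Lemma mpinv_mulmx_sum m n (M U V : 'M[R]_(m, n)) :
  U *m mpinv U = M *m mpinv M ->
  mpinv U *m (M + V) *m mpinv M = mpinv U *m (V *m mpinv M + 1%:M).
Proof.
move=> rangeUM; rewrite (mulmxDr (mpinv U) M) mulmxDl -(mulmxA (mpinv U) M) -rangeUM.
rewrite mulmxA mpinv_mulmxK.
by rewrite mulmxDr mulmx1 mulmxA addrC.
Qed.

Lemma mulmx_induced_mpinv m n (A M N U V : 'M[R]_(m, n)) :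
  A = M - N -> A = U - V ->
  mpinv M *m M = mpinv A *m A -> mpinv U *m U = mpinv A *m A ->
  mpinv U *m (V *m mpinv M + 1%:M) *m A =
    mpinv U *m U - mpinv U *m V *m mpinv M *m N.
Proof.
move=> defAM defAU nullMA nullUA.
have defV : V = U - A by rewrite defAU opprB addrC subrK.
have VA : V *m (mpinv A *m A) = V.
  rewrite {1}defV mulmxBl (mulmxA A) mulmx_mpinvK -nullUA mulmxA mulmx_mpinvK.
  by rewrite -defV.
rewrite mulmxDr mulmx1 mulmxDl -!mulmxA {1}defAM mulmxBr nullMA mulmxBr VA.
rewrite defAU !mulmxBr !mulmxA.
by rewrite addrC addrA subrK.
Qed.

End MoorePenrose.

Theorem theorem4p4 (R : realType) (m n : nat) (A M N U V : 'M[R]_(m, n)) :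
  mx_ge0 (mpinv A) ->
  proper_weak_regular_splitting A M N ->
  proper_weak_regular_splitting A U V ->
  same_range (M + U - A) A ->
  same_null (M + U - A) A ->
  let H := mpinv U *m V *m mpinv M *m N in
  let B := M *m mpinv (M + U - A) *m U in
  let C := B - A in
  [/\ proper_weak_regular_splitting A B C,
      mpinv B = mpinv U *m (V *m mpinv M + 1%:M),
      mpinv B *m C = H &
      forall Bb Cb : 'M[R]_(m, n),
        proper_splitting A Bb Cb -> mpinv Bb *m Cb = H -> Bb = B /\ Cb = C].
Proof.
move=> _ [[defAM /same_rangeE rangeM /same_nullE nullM] M0 MN0].
move=> [[defAU /same_rangeE rangeU /same_nullE nullU] U0 UV0].
move=> /same_rangeE rangeW /same_nullE nullW H B C.
have rangeUW : U *m mpinv U = (M + U - A) *m mpinv (M + U - A).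
  by rewrite rangeU rangeW.
have nullWM : mpinv (M + U - A) *m (M + U - A) = mpinv M *m M.
  by rewrite nullW nullM.
have BB' : B *m mpinv B = M *m mpinv M.
  by rewrite mpinv_sandwich // mulmx_sandwich_mpinv.
have B'B : mpinv B *m B = mpinv U *m U.
  by rewrite mpinv_sandwich // mulmx_mpinv_sandwich.
have mpinvB : mpinv B = mpinv U *m (V *m mpinv M + 1%:M).
  rewrite mpinv_sandwich // -mpinv_mulmx_sum ?rangeU ?rangeM //.
  by rewrite defAU opprB addrCA addrK addrC.
have splitB : proper_splitting A B C.
  split; first by rewrite /C opprB addrC subrK.
  - by apply/same_rangeE; rewrite BB' rangeM.
  - by apply/same_nullE; rewrite B'B nullU.
have inducedB : mpinv B *m C = H.
  rewrite mulmxBr B'B mpinvB (mulmx_induced_mpinv defAM defAU nullM nullU).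
  by rewrite opprB addrC subrK.
split=> //.
- split=> //; last by rewrite inducedB /H -mulmxA; exact: mx_ge0_mul.
  rewrite mpinvB mulmxDr mulmx1 mulmxA.
  exact: mx_ge0_add (mx_ge0_mul UV0 M0) U0.
- move=> Bb Cb splitBb inducedBb.
  have mpinvBb : mpinv Bb = mpinv B.
    by rewrite (mpinv_proper_splitting splitBb) (mpinv_proper_splitting splitB)
      inducedBb inducedB.
  have defBb : Bb = B by rewrite -(mpinvK Bb) mpinvBb mpinvK.
  split=> //; case: splitBb => defA _ _.
  by rewrite /C -defBb {1}defA opprB addrC subrK.
Qed.
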